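(* Let $B(x)=\frac{x}{1+x^2}$, $B_0(x)=x$ and $B_j(x)=B(B_{j-1}(x))$ for $j\ge1$. For every $j\ge0$, the equation $B_j(x)=-1$ has exactly $2^j$ distinct roots in $\mathbb{C}$. *)

From mathcomp Require Import all_boot all_order all_algebra.
From mathcomp Require Import reals complex.
Set Implicit Arguments. Unset Strict Implicit. Unset Printing Implicit Defensive.
Import Order.TTheory GRing.Theory Num.Theory.
Local Open Scope ring_scope.

(* The rational map B(x) = x / (1 + x^2) on the complex numbers C = R[i],
   as a partial function: undefined at the poles x = +- i (where 1 + x^2 = 0). *)
Definition Bmap (R : realType) (x : R[i]) : option R[i] :=
  if 1 + x ^+ 2 == 0 then None else Some (x / (1 + x ^+ 2)).

Fixpoint Biter (R : realType) (j : nat) (x : R[i]) : option R[i] :=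
  match j with
  | 0 => Some x
  | j'.+1 => match Biter j' x with Some y => Bmap y | None => None end
  end.

(* A point y != 0 has the two B-preimages x = (1 +- sqrt(1 - 4 y^2)) / (2 y), the roots of
   y x^2 - x + y = 0, and they are distinct unless y = +- 1/2.  The real interval
   [-1/2, 1/2] is mapped into itself by B (as |2 s| <= 1 + s^2), and -1 lies outside it,
   so no iterated preimage of -1 is 0 or +- 1/2.  Hence each level of the backward orbit
   of -1 has exactly twice as many points as the previous one. *)

From mathcomp Require Import all_boot all_order all_algebra.
From mathcomp Require Import reals complex.
From mathcomp Require Import ring lra.
Import Order.TTheory GRing.Theory Num.Theory.
Local Open Scope ring_scope.
Local Open Scope complex_scope.

Section QuadraticPreimage.
Context {F : fieldType} {y d : F}.
Hypotheses (two_neq0 : 2 != 0 :> F) (y_neq0 : y != 0) (dE : d ^+ 2 = 1 - 4 * y ^+ 2).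

Let y2_neq0 : 2 * y != 0. Proof. by rewrite mulf_neq0. Qed.

Lemma div1sqr_eqP (x : F) :
  x / (1 + x ^+ 2) = y <-> x = (1 + d) / (2 * y) \/ x = (1 - d) / (2 * y).
Proof.
have y4_neq0 : 4 * y != 0 by rewrite mulf_neq0 // -[4]/(2 * 2)%:R natrM mulf_neq0.
have clear_denom : x / (1 + x ^+ 2) = y <-> y * (1 + x ^+ 2) = x.
  have [xx0|xx_neq0] := eqVneq (1 + x ^+ 2) 0.
    rewrite xx0 invr0 mulr0 mulr0; split=> [y0|x0]; first by case/eqP: y_neq0.
    by move: xx0; rewrite -x0 expr0n /= addr0 => /eqP; rewrite oner_eq0.
  by split=> [<-|yxE]; [rewrite divfK | rewrite -{1}yxE mulfK].
have complete_square : y * (1 + x ^+ 2) = x <-> (2 * y * x - 1) ^+ 2 = d ^+ 2.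
  have quadE : (2 * y * x - 1) ^+ 2 - d ^+ 2 = 4 * y * (y * (1 + x ^+ 2) - x).
    by rewrite dE; ring.
  split=> [yxE|/eqP]; first by apply/eqP; rewrite -subr_eq0 quadE yxE subrr mulr0.
  by rewrite -subr_eq0 quadE mulf_eq0 (negbTE y4_neq0) subr_eq0 => /eqP.
rewrite clear_denom complete_square; split=> [/eqP|[]->]; last 2 first.
- by rewrite mulrC divfK // addrC addKr.
- by rewrite mulrC divfK // addrC addKr sqrrN.
rewrite eqf_sqr => /orP[]/eqP xE; [left|right].
  by rewrite -xE; field; rewrite y_neq0 two_neq0.
by rewrite -[d]opprK -xE; field; rewrite y_neq0 two_neq0.
Qed.

Lemma div1sqr_roots_neq : d != 0 -> (1 + d) / (2 * y) != (1 - d) / (2 * y).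
Proof.
move=> d_neq0; apply: contra_neq d_neq0 => /(mulIf (invr_neq0 y2_neq0))/addrI/eqP.
by rewrite -subr_eq0 opprK -mulr2n -mulr_natr mulf_eq0 (negbTE two_neq0) orbF => /eqP.
Qed.

End QuadraticPreimage.

Section BackwardOrbit.
Context {R : realType}.
Local Notation C := R[i].

Lemma BiterSr j (x : C) : Biter j.+1 x = obind (Biter j) (Bmap x).
Proof.
elim: j x => [|j IHj] x; first by rewrite /=; case: (Bmap x).
by rewrite -[LHS]/(obind (@Bmap R) (Biter j.+1 x)) IHj; case: (Bmap x).
Qed.

Lemma Bmap_eq_Some (x y : C) : y != 0 -> Bmap x = Some y <-> x / (1 + x ^+ 2) = y.
Proof.
rewrite /Bmap => y_neq0; case: eqP => [->|_]; last by split=> [[]|->].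
by rewrite invr0 mulr0; split=> // y0; case/eqP: y_neq0.
Qed.

Definition Bpreim (y : C) : seq C :=
  [:: (1 + sqrtc (1 - 4 * y ^+ 2)) / (2 * y); (1 - sqrtc (1 - 4 * y ^+ 2)) / (2 * y)].

Let two_neq0 : 2 != 0 :> C. Proof. by rewrite pnatr_eq0. Qed.

Lemma mem_Bpreim (x y : C) : y != 0 -> x \in Bpreim y <-> Bmap x = Some y.
Proof.
move=> y_neq0; rewrite (Bmap_eq_Some _ _ y_neq0) (div1sqr_eqP two_neq0 y_neq0 (sqr_sqrtc _)).
by rewrite !inE; split=> [/orP[]/eqP|[]->]; rewrite ?eqxx ?orbT; [left|right|..].
Qed.

Lemma uniq_Bpreim (y : C) : y != 0 -> 1 - 4 * y ^+ 2 != 0 -> uniq (Bpreim y).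
Proof.
move=> y_neq0 disc_neq0; rewrite /= inE andbT.
by apply: div1sqr_roots_neq; rewrite ?sqr_sqrtc ?sqrtc_eq0.
Qed.

Lemma Bmap_real (s : R) : Bmap s%:C = Some (s / (1 + s ^+ 2))%:C.
Proof.
have ss_gt0 : 0 < 1 + s ^+ 2 by rewrite ltr_pwDl // sqr_ge0.
rewrite /Bmap.
have -> : 1 + s%:C ^+ 2 = (1 + s ^+ 2)%:C by rewrite rmorphD rmorph1 rmorphXn.
by rewrite fmorph_eq0 (gt_eqF ss_gt0) fmorph_div.
Qed.

Lemma normr_div1sqr_le (s : R) : `|s / (1 + s ^+ 2)| <= 2^-1.
Proof.
have ss_gt0 : 0 < 1 + s ^+ 2 by rewrite ltr_pwDl // sqr_ge0.
have := sqr_ge0 (s - 1); have := sqr_ge0 (s + 1).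
by rewrite ler_norml ler_pdivlMr // ler_pdivrMr //; nra.
Qed.

Lemma Biter_small_real j (r : R) :
  `|r| <= 2^-1 -> exists2 s : R, Biter j r%:C = Some s%:C & `|s| <= 2^-1.
Proof.
move=> r_le; elim: j => [|j [s sE _]]; first by exists r.
by rewrite /= sE Bmap_real; eexists; last exact: normr_div1sqr_le.
Qed.

Lemma Biter_real_neq_m1 j (r : R) : `|r| <= 2^-1 -> Biter j r%:C <> Some (-1).
Proof.
move=> /(Biter_small_real j)[s -> s_le] [s_m1 _].
by move: s_le; rewrite s_m1 normrN1; lra.
Qed.

Lemma Biter_eq_m1_nondegenerate j (y : C) :
  Biter j y = Some (-1) -> y != 0 /\ 1 - 4 * y ^+ 2 != 0.
Proof.
move=> yP; have not_small_real (r : R) : `|r| <= 2^-1 -> y != r%:C.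
  by move=> r_le; apply/eqP => yE; move: yP; rewrite yE; apply: Biter_real_neq_m1.
have half_le : `|2^-1 : R| <= 2^-1 by rewrite ger0_norm ?invr_ge0 ?ler0n.
split.
  by have := not_small_real 0; rewrite normr0 rmorph0; apply; rewrite invr_ge0 ler0n.
apply/eqP => disc0; have /eqP : (2 * y) ^+ 2 = 1 by rewrite -[RHS]subr0 -disc0; ring.
rewrite sqrf_eq1 => /orP[]/eqP y2E.
  move/eqP: (not_small_real _ half_le); apply.
  by apply: (mulfI two_neq0); rewrite fmorphV rmorph_nat y2E mulfV.
have := not_small_real (- 2^-1); rewrite normrN => /(_ half_le)/eqP; apply.
by apply: (mulfI two_neq0); rewrite rmorphN fmorphV rmorph_nat y2E mulrN mulfV.
Qed.

Definition Bpreims (s : seq C) : seq C := [seq x | y <- s, x <- Bpreim y].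

Lemma size_Bpreims (s : seq C) : size (Bpreims s) = (2 * size s)%N.
Proof. by elim: s => //= y s IHs; rewrite IHs mulnS. Qed.

Lemma mem_Bpreims (s : seq C) (x : C) : {in s, forall y, y != 0} ->
  x \in Bpreims s <-> exists2 y, y \in s & Bmap x = Some y.
Proof.
move=> s_neq0; split=> [/allpairsPdep[y [x' [ys x'P ->]]]|[y ys xP]].
  by exists y => //; apply/(mem_Bpreim _ _ (s_neq0 y ys)).
by apply/allpairsPdep; exists y, x; split=> //; apply/(mem_Bpreim _ _ (s_neq0 y ys)).
Qed.

Lemma uniq_Bpreims (s : seq C) : uniq s ->
  {in s, forall y, y != 0 /\ 1 - 4 * y ^+ 2 != 0} -> uniq (Bpreims s).
Proof.
move=> s_uniq s_good; apply: allpairs_uniq_dep => // [y /s_good[]|].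
  exact: uniq_Bpreim.
move=> _ _ /allpairsPdep[y1 [x1 [y1s x1P ->]]] /allpairsPdep[y2 [x2 [y2s x2P ->]]] /= x12.
have [y1_neq0 _] := s_good y1 y1s; have [y2_neq0 _] := s_good y2 y2s.
move/(mem_Bpreim _ _ y1_neq0): x1P; move/(mem_Bpreim _ _ y2_neq0): x2P.
by rewrite x12 => -> [->].
Qed.

End BackwardOrbit.

Theorem proposition2p8 (R : realType) (j : nat) :
  exists s : seq R[i],
    [/\ uniq s, size s = (2 ^ j)%N &
        forall x : R[i], x \in s <-> Biter j x = Some (-1)].
Proof.
elim: j => [|j [s [s_uniq s_size sP]]].
  by exists [:: -1]; split=> // x; rewrite inE; split=> [/eqP->|[->]].
have s_good : {in s, forall y, y != 0 /\ 1 - 4 * y ^+ 2 != 0}.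
  by move=> y /sP /Biter_eq_m1_nondegenerate.
exists (Bpreims s); split.
- exact: uniq_Bpreims.
- by rewrite size_Bpreims s_size expnS.
move=> x; rewrite mem_Bpreims ?BiterSr => [|y /s_good[]//].
split=> [[y /sP yP ->] //|]; case: (Bmap x) => [y /sP ys|//].
by exists y.
Qed.
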